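(* Let $L=2\pi$ and let $A:D(A)\subset L^2(0,L)\to L^2(0,L)$ be defined by $A\varphi=-\varphi_x-\varphi_{xxx}$ with $D(A)=\{\varphi\in H^3(0,L):\varphi(0)=\varphi(L)=\varphi_x(L)=0\}$. Then $\sigma_p(A)\cap i\mathbb R=\{0\}$. Moreover, the kernel of $A$ is $\{a(1-\cos x): a\in\mathbb R\}$.
   Context: Point spectrum is taken for the complexification of $A$. *)

From HB Require Import structures.
From mathcomp Require Import all_boot all_order all_algebra.
From mathcomp Require Import all_classical all_reals all_analysis.
Set Implicit Arguments. Unset Strict Implicit. Unset Printing Implicit Defensive.
Import Order.TTheory GRing.Theory Num.Theory.
Local Open Scope classical_set_scope.
Local Open Scope ring_scope.

Section KdV.
Variable R : realType.
Local Notation leb := (@lebesgue_measure R).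

Definition Lper : R := 2 * pi.

(* the interval [0,L] (open vs closed differs by a null set) *)
Definition I0L : set R := `[0, Lper]%classic.

Definition L2 (g : R -> R) : Prop :=
  measurable_fun I0L g /\
  (\int[leb]_(x in I0L) ((g x) ^+ 2)%:E < +oo)%E.

Definition aeq (f g : R -> R) : Prop :=
  {ae leb, forall x, I0L x -> f x = g x}.

(* phi in H^3(0,L) with weak derivatives phi1, phi2, phi3, via the standard
   absolutely continuous representative:
   phi^(k)(x) = phi^(k)(0) + int_0^x phi^(k+1), for x in [0,L], phi3 in L^2. *)
Definition H3_with (phi phi1 phi2 phi3 : R -> R) : Prop :=
  L2 phi3 /\
  leb.-integrable I0L (EFin \o phi3) /\
  leb.-integrable I0L (EFin \o phi2) /\
  leb.-integrable I0L (EFin \o phi1) /\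
  (forall x, I0L x -> phi2 x = phi2 0 + Rintegral leb `[0, x] phi3) /\
  (forall x, I0L x -> phi1 x = phi1 0 + Rintegral leb `[0, x] phi2) /\
  (forall x, I0L x -> phi x = phi 0 + Rintegral leb `[0, x] phi1).

(* Graph of A: phi in D(A) and A phi = psi in L^2(0,L), where
   A phi = - phi_x - phi_xxx and
   D(A) = {phi in H^3(0,L) : phi(0) = phi(L) = phi_x(L) = 0}. *)
Definition A_graph (phi psi : R -> R) : Prop :=
  exists phi1 phi2 phi3,
    H3_with phi phi1 phi2 phi3 /\
    phi 0 = 0 /\ phi Lper = 0 /\ phi1 Lper = 0 /\
    aeq psi (fun x => - phi1 x - phi3 x).

(* i*mu (mu real) is in the point spectrum of the complexification of A:
   there is u + i v in D(A_C), nonzero in L^2, with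
   A(u + i v) = i mu (u + i v), i.e. A u = - mu v and A v = mu u. *)
Definition imag_eigenvalue (mu : R) : Prop :=
  exists u v : R -> R,
    ~ (aeq u (fun=> 0) /\ aeq v (fun=> 0)) /\
    A_graph u (fun x => - mu * v x) /\
    A_graph v (fun x => mu * u x).

End KdV.

From HB Require Import structures.
From mathcomp Require Import all_boot all_order all_algebra.
From mathcomp Require Import all_classical all_reals all_analysis.
From mathcomp Require Import ring lra zify.
From mathcomp Require Import measurable_realfun.
Import Order.TTheory GRing.Theory Num.Theory.
Import numFieldNormedType.Exports.
Set Implicit Arguments. Unset Strict Implicit. Unset Printing Implicit Defensive.
Local Open Scope classical_set_scope.
Local Open Scope ring_scope.

(* An eigenfunction [w = u + i v] of [A] for [i mu] solves [w''' + w' + i mu w = 0]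
   with [w(0) = w(L) = w'(L) = 0]. The conserved quantity
   [Re (2 conj(w) w'' - |w'|^2 + |w|^2)] gives [w'(0) = 0], and pairing [w] with the
   solutions [exp (l x)] of the adjoint equation, [l^3 + l = i mu], gives
   [w''(0) = exp (l L) w''(L)] for each such [l]. If [w''(L) = 0], [w] vanishes by
   uniqueness for the Cauchy problem at [0]. Otherwise all [exp (l L)] coincide: no [l]
   has a nonzero real part, and the three imaginary roots [l = i t] have integral
   differences since [L = 2 pi], which only happens for [mu = 0]. The kernel is found by
   subtracting from [phi] the solution [k (1 - cos x) + p sin x] with the same Cauchy
   data at [0]. *)

Section PointwiseDerivative.
Variables (R : realType) (x : R) (f g : R -> R) (df dg : R).
Hypotheses (hf : is_derive x 1 f df) (hg : is_derive x 1 g dg).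

Lemma is_derive_add : is_derive x 1 (fun y => f y + g y) (df + dg).
Proof. exact: is_deriveD. Qed.

Lemma is_derive_mul : is_derive x 1 (fun y => f y * g y) (df * g x + f x * dg).
Proof.
have := is_deriveM hf hg.
by rewrite /GRing.scale /= [g x * _]mulrC addrC.
Qed.

Lemma is_derive_opp : is_derive x 1 (fun y => - f y) (- df).
Proof. exact: is_deriveN. Qed.

End PointwiseDerivative.

Ltac derive_tac := apply: is_derive_eq; repeat first
  [ apply: is_derive_add | apply: is_derive_mul | apply: is_derive_opp
  | apply: is_derive_cst | apply: is_derive_id | eassumption ];
  rewrite ?/GRing.scale /=.

Section Segment.
Variables (R : realType) (b : R).
Hypothesis b_gt0 : 0 < b.
Local Notation leb := (@lebesgue_measure R).
Local Notation seg := `[0, b]%classic.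
Implicit Types (f g h F : R -> R) (c x : R).

Definition cont_on (f : R -> R) := {within `[0, b], continuous f}.

Definition deriv_on (f f' : R -> R) :=
  forall x, x \in `]0, b[ -> is_derive x 1 f (f' x).

Lemma segb : seg b.
Proof. by rewrite /= in_itv /= lexx ltW. Qed.

Lemma seg_sub x : seg x -> `[0, x] `<=` seg.
Proof.
rewrite /= in_itv /= => /andP[_ xb] y /=; rewrite !in_itv /= => /andP[-> yx].
exact: le_trans yx xb.
Qed.

Lemma cont_on_interior f x : cont_on f -> x \in `]0, b[ -> {for x, continuous f}.
Proof. by move=> /(continuous_within_itvP _ b_gt0) [+ _ _]; apply. Qed.

Lemma eq_cont_on f g : (forall x, seg x -> f x = g x) -> cont_on f -> cont_on g.
Proof. by move=> fg; apply: subspace_eq_continuous => x; rewrite inE => /fg. Qed.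

Lemma cont_onD f g : cont_on f -> cont_on g -> cont_on (fun x => f x + g x).
Proof. by move=> cf cg x; exact: cvgD (cf x) (cg x). Qed.

Lemma cont_onM f g : cont_on f -> cont_on g -> cont_on (fun x => f x * g x).
Proof. by move=> cf cg x; exact: cvgM (cf x) (cg x). Qed.

Lemma cont_onN f : cont_on f -> cont_on (fun x => - f x).
Proof. by move=> cf x; exact: cvgN (cf x). Qed.

Lemma cont_on_cst c : cont_on (fun=> c).
Proof. by move=> x; exact: cvg_cst. Qed.

Lemma cont_on_derivable f : (forall x, derivable f x 1) -> cont_on f.
Proof. by move=> df; apply: derivable_within_continuous => x _; exact: df. Qed.

Lemma cont_on_integrable f : cont_on f -> leb.-integrable `[0, b] (EFin \o f).
Proof.
by move=> cf; apply: continuous_compact_integrable => //; exact: segment_compact.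
Qed.

Lemma cont_on_primitive f F c : leb.-integrable `[0, b] (EFin \o f) ->
  (forall x, seg x -> F x = c + \int[leb]_(t in `[0, x]) f t) -> cont_on F.
Proof.
move=> intf HF.
have cG := parameterized_integral_continuous (ltW b_gt0) intf.
apply: (@eq_cont_on (fun x => c + parameterized_integral leb 0 x f)).
  by move=> x /HF ->.
by apply: cont_onD => //; exact: cont_on_cst.
Qed.

Lemma deriv_on_primitive f F c : cont_on f ->
  (forall x, seg x -> F x = c + \int[leb]_(t in `[0, x]) f t) -> deriv_on F f.
Proof.
move=> cf HF x xin.
have x0 : 0 < x by rewrite (itvP xin).
have xb : x < b by rewrite (itvP xin).
have [dG G'] := continuous_FTC1_closed xb (cont_on_integrable cf) x0
  (cont_on_interior cf xin).
have dcG : is_derive x 1 (fun y => c + \int[leb]_(t in `[0, y]) f t) (f x).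
  rewrite -[f x]add0r -G' derive1E.
  by apply: is_derive_add; exact: derivableP.
apply: near_eq_is_derive dcG; near=> y; rewrite HF //.
have : y \in `]0, b[ by near: y; exact: near_in_itvoo.
by rewrite /= !in_itv /= => /andP[/ltW -> /ltW ->].
Unshelve. all: by end_near. Qed.

Lemma eq_deriv_on f g h :
  deriv_on f g -> (forall x, x \in `]0, b[ -> g x = h x) -> deriv_on f h.
Proof. by move=> df gh x xin; rewrite -gh //; exact: df. Qed.

Lemma deriv_on_nonpos f f' : cont_on f -> deriv_on f f' ->
  (forall x, x \in `]0, b[ -> f' x <= 0) -> forall x, seg x -> f x <= f 0.
Proof.
move=> cf df f'_le0 x; rewrite /= in_itv /= => /andP[x_ge0 xb].
have [->|x_neq0] := eqVneq x 0; first by [].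
have x_gt0 : 0 < x by rewrite lt_def x_neq0 x_ge0.
have sub : `]0, x[ `<=` `]0, b[.
  by move=> y; rewrite /= !in_itv /= => /andP[-> /lt_le_trans ->].
rewrite -subr_le0.
have [y yin ->] : exists2 y, y \in `]0, x[ & f x - f 0 = f' y * (x - 0).
  apply: MVT => //; first by move=> y /sub; exact: df.
  apply: continuous_subspaceW cf.
  by move=> y; rewrite /= !in_itv /= => /andP[-> /le_trans ->].
by rewrite subr0 mulr_le0_ge0 // ?f'_le0 ?sub // ltW.
Qed.

Lemma deriv_on0_const f : cont_on f -> deriv_on f (fun=> 0) ->
  forall x, seg x -> f x = f 0.
Proof.
move=> cf df x xI; apply/eqP; rewrite eq_le (deriv_on_nonpos cf df) //=.
have dN : deriv_on (fun x => - f x) (fun=> 0).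
  by move=> y yin; rewrite -oppr0; exact: is_derive_opp (df y yin).
by rewrite -lerN2 (deriv_on_nonpos (cont_onN cf) dN) // => y _.
Qed.

Lemma deriv_on_FTC F f : cont_on F -> cont_on f -> deriv_on F f ->
  forall x, seg x -> F x = F 0 + \int[leb]_(t in `[0, x]) f t.
Proof.
move=> cF cf dF.
pose G x := F 0 + \int[leb]_(t in `[0, x]) f t.
have cG : cont_on G by apply: cont_on_primitive (cont_on_integrable cf) _.
have dG : deriv_on G f by apply: deriv_on_primitive.
have dH : deriv_on (fun x => F x - G x) (fun=> 0).
  move=> x xin; rewrite -(subrr (f x)).
  exact: is_derive_add (dF x xin) (is_derive_opp (dG x xin)).
move=> x xI; apply/eqP; rewrite -subr_eq0; apply/eqP.
rewrite -/(G x) (deriv_on0_const (cont_onD cF (cont_onN cG)) dH xI).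
by rewrite /G set_itv1 Rintegral_set1 addr0 subrr.
Qed.

End Segment.

Ltac cont_tac := repeat match goal with
  | |- cont_on _ (fun _ => ?c) => exact: cont_on_cst
  | |- cont_on _ (fun x => _ + _) => apply: cont_onD
  | |- cont_on _ (fun x => _ * _) => apply: cont_onM
  | |- cont_on _ (fun x => _ ^+ 2) => apply: cont_onM
  | |- cont_on _ (fun x => - _) => apply: cont_onN
  | |- _ => eassumption
  end.

Section ExpRot.
Variable R : realType.
Implicit Types c d p q x : R.

Lemma is_derive_scale_comp (f : R -> R) f' c x :
  is_derive (c * x) 1 f f' -> is_derive x 1 (fun y => f (c * y)) (c * f').
Proof.
move=> df; have lin : is_derive x 1 (fun y => c * y) c.
  by have := is_derive_mul (is_derive_cst c x 1) (is_derive_id x 1); rewrite mul0r add0r mulr1.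
by rewrite mulrC; exact: is_derive1_comp df lin.
Qed.

Definition exp_rot c d p q x := expR (c * x) * (p * cos (d * x) + q * sin (d * x)).

Lemma exp_rot0 c d p q : exp_rot c d p q 0 = p.
Proof. by rewrite /exp_rot !mulr0 expR0 cos0 sin0; ring. Qed.

Lemma is_derive_exp_rot c d p q x :
  is_derive x 1 (exp_rot c d p q) (exp_rot c d (c * p + d * q) (c * q - d * p) x).
Proof.
have := is_derive_scale_comp (is_derive_expR (c * x)).
have := is_derive_scale_comp (is_derive_cos (d * x)).
have := is_derive_scale_comp (is_derive_sin (d * x)).
by move=> ? ? ?; rewrite /exp_rot; derive_tac; ring.
Qed.

End ExpRot.

Section AdjointRoots.
Variable R : realType.
Implicit Types (mu c d t e C S X Y : R).

(* [c + i d] solves the characteristic equation [l^3 + l = i mu] of the adjoint problem. *)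
Definition adjoint_root mu c d :=
  c ^+ 3 - 3 * c * d ^+ 2 = - c /\ 3 * c ^+ 2 * d - d ^+ 3 = mu - d.

Lemma adjoint_root_imag mu t : adjoint_root mu 0 t <-> t ^+ 3 - t + mu = 0.
Proof. by split=> [[_ h]|h]; [lra | split; lra]. Qed.

Lemma adjoint_imag_root_exists mu : exists t, adjoint_root mu 0 t.
Proof.
pose f t := t * t * t - t + mu.
have df x : derivable f x 1.
  have : is_derive x 1 f (x * x * 1 + x * x * 1 + x * x * 1 - 1 + 0).
    by rewrite /f; derive_tac; ring.
  by case.
pose M := `|mu| + 1.
have hmu : - `|mu| <= mu <= `|mu| by rewrite -ler_norml.
have [t _ ft] : exists2 t, t \in `[- M, M] & f t = 0.
  apply: IVT; first by rewrite /M; lra.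
    by apply: derivable_within_continuous => x _; exact: df.
  have h1 : f (- M) <= 0 by rewrite /f /M; nra.
  have h2 : 0 <= f M by rewrite /f /M; nra.
  by rewrite ge_min le_max h1 h2 orbT.
by exists t; apply/adjoint_root_imag; rewrite -ft /f; ring.
Qed.

Lemma rotation_sqr_norm e C S X Y : C ^+ 2 + S ^+ 2 = 1 ->
  (e * (C * X - S * Y)) ^+ 2 + (e * (S * X + C * Y)) ^+ 2 = e ^+ 2 * (X ^+ 2 + Y ^+ 2).
Proof.
move=> CS; rewrite -[RHS]mulr1 -CS; ring.
Qed.

Lemma rotation_inj C1 S1 C2 S2 X Y : 0 < X ^+ 2 + Y ^+ 2 ->
  C1 * X - S1 * Y = C2 * X - S2 * Y -> S1 * X + C1 * Y = S2 * X + C2 * Y ->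
  C1 = C2 /\ S1 = S2.
Proof.
move=> XY e1 e2.
have : ((C1 - C2) ^+ 2 + (S1 - S2) ^+ 2) * (X ^+ 2 + Y ^+ 2) = 0.
  transitivity (((C1 * X - S1 * Y) - (C2 * X - S2 * Y)) ^+ 2 +
                ((S1 * X + C1 * Y) - (S2 * X + C2 * Y)) ^+ 2); first by ring.
  by rewrite e1 e2 !subrr expr0n /= addr0.
move/eqP; rewrite mulf_eq0 (gt_eqF XY) orbF => /eqP h.
have := sqr_ge0 (C1 - C2); have := sqr_ge0 (S1 - S2) => ? ?.
have /eqP : (C1 - C2) ^+ 2 = 0 by lra.
have /eqP : (S1 - S2) ^+ 2 = 0 by lra.
by rewrite !sqrf_eq0 !subr_eq0 => /eqP -> /eqP ->.
Qed.

End AdjointRoots.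

Section ClassicalSolutions.
Variables (R : realType) (b : R).
Hypothesis b_gt0 : 0 < b.
Local Notation seg := `[0, b]%classic.
Local Notation cont_on := (cont_on b).
Local Notation deriv_on := (deriv_on b).
Implicit Types (mu c d k p q : R) (g phi chi psi xi u v w z : R -> R).

Record A_classical phi phi1 phi2 psi : Prop := A_Classical {
  A_cont : cont_on phi; A_cont1 : cont_on phi1; A_cont2 : cont_on phi2;
  A_deriv : deriv_on phi phi1; A_deriv1 : deriv_on phi1 phi2;
  A_deriv2 : deriv_on phi2 (fun x => - psi x - phi1 x) }.

Definition eigen_ode mu u u1 u2 v v1 v2 :=
  A_classical u u1 u2 (fun x => - mu * v x) /\ A_classical v v1 v2 (fun x => mu * u x).

Lemma eq_A_classical phi phi1 phi2 psi psi' : (forall x, psi x = psi' x) ->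
  A_classical phi phi1 phi2 psi -> A_classical phi phi1 phi2 psi'.
Proof.
by move=> e [c0 c1 c2 d0 d1 d2]; split=> //; apply: eq_deriv_on d2 _ => x _; rewrite e.
Qed.

Lemma A_classicalB phi phi1 phi2 psi chi chi1 chi2 xi :
  A_classical phi phi1 phi2 psi -> A_classical chi chi1 chi2 xi ->
  A_classical (fun x => phi x - chi x) (fun x => phi1 x - chi1 x)
    (fun x => phi2 x - chi2 x) (fun x => psi x - xi x).
Proof.
move=> [c0 c1 c2 d0 d1 d2] [e0 e1 e2 f0 f1 f2]; split; try by cont_tac.
- by move=> x xin; exact: is_derive_add (d0 x xin) (is_derive_opp (f0 x xin)).
- by move=> x xin; exact: is_derive_add (d1 x xin) (is_derive_opp (f1 x xin)).
- move=> x xin; have := d2 x xin; have := f2 x xin => ? ?.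
  by derive_tac; ring.
Qed.

Lemma cont_on_cos : cont_on (@cos R).
Proof. by apply: cont_on_derivable => x; exact: derivable_cos. Qed.

Lemma cont_on_sin : cont_on (@sin R).
Proof. by apply: cont_on_derivable => x; exact: derivable_sin. Qed.

Lemma A_classical_trig k p :
  A_classical (fun x => k * (1 - cos x) + p * sin x) (fun x => k * sin x + p * cos x)
    (fun x => k * cos x - p * sin x) (fun=> 0).
Proof.
have cc := cont_on_cos; have cs := cont_on_sin.
split; try by cont_tac.
all: move=> x _; have := is_derive_sin x; have := is_derive_cos x => ? ?.
all: by derive_tac; ring.
Qed.

Lemma exp_rot_cont_on c d p q : cont_on (exp_rot c d p q).
Proof. by apply: cont_on_derivable => x; have [] := is_derive_exp_rot c d p q x. Qed.

(* Gronwall: [E = |w|^2 + |w'|^2 + |w''|^2] satisfies [E' <= (2 + mu^2) E]. *)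
Lemma eigen_ode_cauchy0 mu u u1 u2 v v1 v2 : eigen_ode mu u u1 u2 v v1 v2 ->
  u 0 = 0 -> u1 0 = 0 -> u2 0 = 0 -> v 0 = 0 -> v1 0 = 0 -> v2 0 = 0 ->
  forall x, seg x ->
    u x = 0 /\ u1 x = 0 /\ u2 x = 0 /\ v x = 0 /\ v1 x = 0 /\ v2 x = 0.
Proof.
move=> [[cu cu1 cu2 du du1 du2] [cv cv1 cv2 dv dv1 dv2]] u0 u10 u20 v0 v10 v20.
pose C := 2 + mu ^+ 2.
pose E x := u x ^+ 2 + u1 x ^+ 2 + u2 x ^+ 2 + v x ^+ 2 + v1 x ^+ 2 + v2 x ^+ 2.
pose S x := (u x - u1 x) ^+ 2 + (mu * u2 x - v x) ^+ 2
  + (v x - v1 x) ^+ 2 + (mu * v2 x + u x) ^+ 2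
  + (mu * u x) ^+ 2 + u1 x ^+ 2 + (mu * u1 x) ^+ 2 + u2 x ^+ 2 + u2 x ^+ 2
  + (mu * v x) ^+ 2 + v1 x ^+ 2 + (mu * v1 x) ^+ 2 + v2 x ^+ 2 + v2 x ^+ 2.
pose G x := E x * expR (- C * x).
have cG : cont_on G.
  rewrite /G /E; cont_tac; apply: cont_on_derivable => y.
  by have [] := is_derive_scale_comp (is_derive_expR (- C * y)).
have dG : deriv_on G (fun x => - S x * expR (- C * x)).
  move=> x xin; have := is_derive_scale_comp (is_derive_expR (- C * x)).
  have := du x xin; have := du1 x xin; have := du2 x xin.
  have := dv x xin; have := dv1 x xin; have := dv2 x xin => ? ? ? ? ? ? ?.
  by rewrite /G /E; derive_tac; rewrite /S /C; ring.
have G0 : G 0 = 0 by rewrite /G /E u0 u10 u20 v0 v10 v20 expr0n /=; ring.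
move=> y yI.
have Gy : G y <= 0.
  rewrite -G0; apply: (deriv_on_nonpos cG dG _ yI) => z _.
  by rewrite mulNr oppr_le0 mulr_ge0 ?expR_ge0 // /S; do !apply: addr_ge0; exact: sqr_ge0.
have Ey : E y <= 0 by move: Gy; rewrite /G pmulr_lle0 // expR_gt0.
by move: Ey; rewrite /E; do !split; nra.
Qed.

Definition boundary_conditions u u1 := [/\ u 0 = 0, u b = 0 & u1 b = 0].

Lemma eigen_ode_deriv0 mu u u1 u2 v v1 v2 : eigen_ode mu u u1 u2 v v1 v2 ->
  boundary_conditions u u1 -> boundary_conditions v v1 -> u1 0 = 0 /\ v1 0 = 0.
Proof.
move=> [[cu cu1 cu2 du du1 du2] [cv cv1 cv2 dv dv1 dv2]] [u0 ub u1b] [v0 vb v1b].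
pose F x := 2 * (u x * u2 x) - u1 x ^+ 2 + u x ^+ 2
  + 2 * (v x * v2 x) - v1 x ^+ 2 + v x ^+ 2.
have cF : cont_on F by rewrite /F; cont_tac.
have dF : deriv_on F (fun=> 0).
  move=> x xin; have := du x xin; have := du1 x xin; have := du2 x xin.
  have := dv x xin; have := dv1 x xin; have := dv2 x xin => ? ? ? ? ? ?.
  by rewrite /F; derive_tac; ring.
have := deriv_on0_const cF dF (segb b_gt0); rewrite /F u0 v0 ub vb u1b v1b.
by split; nra.
Qed.

(* [K] is the bilinear concomitant of the equation and its adjoint. *)
Lemma eigen_ode_pairing mu u u1 u2 v v1 v2 w w1 w2 z z1 z2 :
  eigen_ode mu u u1 u2 v v1 v2 -> eigen_ode (- mu) w w1 w2 z z1 z2 ->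
  let K x := w x * u2 x - w1 x * u1 x + (w2 x + w x) * u x
    - z x * v2 x + z1 x * v1 x - (z2 x + z x) * v x in
  K b = K 0.
Proof.
move=> [[cu cu1 cu2 du du1 du2] [cv cv1 cv2 dv dv1 dv2]].
move=> [[cw cw1 cw2 dw dw1 dw2] [cz cz1 cz2 dz dz1 dz2]] K.
have cK : cont_on K by rewrite /K; cont_tac.
have dK : deriv_on K (fun=> 0).
  move=> x xin; have := du x xin; have := du1 x xin; have := du2 x xin.
  have := dv x xin; have := dv1 x xin; have := dv2 x xin.
  have := dw x xin; have := dw1 x xin; have := dw2 x xin.
  have := dz x xin; have := dz1 x xin; have := dz2 x xin.
  move=> ? ? ? ? ? ? ? ? ? ? ? ?.
  by rewrite /K; derive_tac; ring.
exact (deriv_on0_const cK dK (segb b_gt0)).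
Qed.

Lemma deriv_on_exp_rot c d p q g :
  (forall x, exp_rot c d (c * p + d * q) (c * q - d * p) x = g x) ->
  deriv_on (exp_rot c d p q) g.
Proof. by move=> e x _; rewrite -e; exact: is_derive_exp_rot. Qed.

(* [exp_rot c d p q] and [exp_rot c d (- q) p] are the real and imaginary parts of
   [exp (l x) (p - i q)], [l = c + i d]; multiplying by [l] maps [(p, q)] to [(p1, q1)]. *)
Lemma adjoint_exp_solution mu c d p q : adjoint_root mu c d ->
  let p1 := c * p + d * q in let q1 := c * q - d * p in
  let p2 := c * p1 + d * q1 in let q2 := c * q1 - d * p1 in
  eigen_ode (- mu) (exp_rot c d p q) (exp_rot c d p1 q1) (exp_rot c d p2 q2)
    (exp_rot c d (- q) p) (exp_rot c d (- q1) p1) (exp_rot c d (- q2) p2).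
Proof.
move=> [hc hd] p1 q1 p2 q2; have ce := exp_rot_cont_on.
have e3p : c * p2 + d * q2 = - c * p + (mu - d) * q.
  by rewrite -[- c]hc -[mu - d]hd /p2 /q2 /p1 /q1; ring.
have e3q : c * q2 - d * p2 = - c * q - (mu - d) * p.
  by rewrite -[- c]hc -[mu - d]hd /p2 /q2 /p1 /q1; ring.
have e3p' : c * p2 - d * - q2 = - c * p + (mu - d) * q by rewrite mulrN opprK.
have e3q' : c * - q2 + d * p2 = c * q + (mu - d) * p.
  by rewrite mulrN addrC -opprB e3q; ring.
split; split=> //; apply: deriv_on_exp_rot => x.
all: by rewrite ?e3p ?e3q ?e3p' ?e3q' /exp_rot /p2 /q2 /p1 /q1; ring.
Qed.

(* Pairing [w] with [exp (l x)] yields [w''(0) = exp (l b) w''(b)]. *)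
Lemma eigen_ode_rotation mu c d u u1 u2 v v1 v2 : eigen_ode mu u u1 u2 v v1 v2 ->
  boundary_conditions u u1 -> boundary_conditions v v1 -> adjoint_root mu c d ->
  u2 0 = expR (c * b) * (cos (d * b) * u2 b - sin (d * b) * v2 b) /\
  v2 0 = expR (c * b) * (sin (d * b) * u2 b + cos (d * b) * v2 b).
Proof.
move=> H bu bv hr; have [u10 v10] := eigen_ode_deriv0 H bu bv.
case: bu bv => [u0 ub u1b] [v0 vb v1b].
have := eigen_ode_pairing H (adjoint_exp_solution 1 0 hr).
have := eigen_ode_pairing H (adjoint_exp_solution 0 1 hr).
rewrite /= !exp_rot0 u0 u10 v0 v10 ub u1b vb v1b /exp_rot => k2 k1.
by split; nra.
Qed.

Lemma eigen_ode_boundary_zero mu u u1 u2 v v1 v2 : eigen_ode mu u u1 u2 v v1 v2 ->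
  boundary_conditions u u1 -> boundary_conditions v v1 -> u2 b = 0 -> v2 b = 0 ->
  forall x, seg x -> u x = 0 /\ v x = 0.
Proof.
move=> H bu bv u2b v2b.
have [t ht] := adjoint_imag_root_exists mu.
have [u20 v20] := eigen_ode_rotation H bu bv ht.
have [u10 v10] := eigen_ode_deriv0 H bu bv.
case: bu bv => [u0 _ _] [v0 _ _].
rewrite u2b v2b !(mulr0, subrr, addr0) in u20 v20.
by move=> x /(eigen_ode_cauchy0 H u0 u10 u20 v0 v10 v20) [-> [_ [_ [-> _]]]].
Qed.

Lemma eigen_ode_adjoint_roots mu u u1 u2 v v1 v2 : eigen_ode mu u u1 u2 v v1 v2 ->
  boundary_conditions u u1 -> boundary_conditions v v1 -> 0 < u2 b ^+ 2 + v2 b ^+ 2 ->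
  (forall c d, adjoint_root mu c d -> c = 0) /\
  (forall t t', adjoint_root mu 0 t -> adjoint_root mu 0 t' -> cos ((t - t') * b) = 1).
Proof.
move=> H bu bv N_gt0; have rot := eigen_ode_rotation H bu bv.
split=> [c d hcd | t t' ht ht'].
- have [t ht] := adjoint_imag_root_exists mu.
  have [u20 v20] := rot _ _ hcd; have [u20' v20'] := rot _ _ ht.
  have N0 : u2 0 ^+ 2 + v2 0 ^+ 2 = expR (c * b) ^+ 2 * (u2 b ^+ 2 + v2 b ^+ 2).
    by rewrite u20 v20 rotation_sqr_norm // cos2Dsin2.
  have N1 : u2 0 ^+ 2 + v2 0 ^+ 2 = u2 b ^+ 2 + v2 b ^+ 2.
    by rewrite u20' v20' rotation_sqr_norm ?cos2Dsin2 // mul0r expR0 expr1n mul1r.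
  have /eqP : expR (c * b) ^+ 2 = 1.
    by apply/(mulIf (lt0r_neq0 N_gt0)); rewrite /= mul1r -N0 N1.
  rewrite sqrf_eq1 => /orP[/eqP|/eqP e]; last by have := expR_gt0 (c * b); rewrite e; lra.
  rewrite -expR0 => /expR_inj /eqP.
  by rewrite mulf_eq0 (gt_eqF b_gt0) orbF => /eqP.
- have [u20 v20] := rot _ _ ht; have [u20' v20'] := rot _ _ ht'.
  rewrite mul0r expR0 !mul1r in u20 v20 u20' v20'.
  have [eC eS] := rotation_inj N_gt0 (etrans (esym u20) u20') (etrans (esym v20) v20').
  by rewrite mulrBl cosB eC eS -!expr2 cos2Dsin2.
Qed.

Lemma A_classical_cauchy0 phi phi1 phi2 : A_classical phi phi1 phi2 (fun=> 0) ->
  phi 0 = 0 -> phi1 0 = 0 -> phi2 0 = 0 ->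
  forall x, seg x -> phi x = 0 /\ phi1 x = 0.
Proof.
move=> H phi0 phi10 phi20 x xI.
have H0 : eigen_ode 0 phi phi1 phi2 (fun=> 0) (fun=> 0) (fun=> 0).
  split; first by apply: eq_A_classical H => y; ring.
  split; try exact: cont_on_cst; move=> y _; try exact: is_derive_cst.
  by derive_tac; ring.
by have [-> [-> _]] := eigen_ode_cauchy0 H0 phi0 phi10 phi20 erefl erefl erefl xI.
Qed.

End ClassicalSolutions.

Lemma three_sqr_add_sqr_eq12 (x w : int) : 3 * x ^+ 2 + w ^+ 2 = 12 -> w * (w ^+ 2 - 9) = 0.
Proof.
move=> h; have w_small : -3 <= w <= 3 by apply/andP; split; nia.
have x_small : -2 <= x <= 2 by apply/andP; split; nia.
move: h; have [->|[->|[->|[->|[->|[->|->]]]]]] : w = -3 \/ w = -2 \/ w = -1 \/ w = 0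
  \/ w = 1 \/ w = 2 \/ w = 3 by lia.
all: have [->|[->|[->|[->|->]]]] : x = -2 \/ x = -1 \/ x = 0 \/ x = 1 \/ x = 2 by lia.
all: by rewrite !expr2; lia.
Qed.

Section IntegralGaps.
Variable R : realType.

Lemma cosD2piz (k : int) (a : R) : cos (a + pi *+ 2 *~ k) = cos a.
Proof.
case: k => n; first exact: (periodicn (@cosD2pi R)).
rewrite NegzE mulrNz -cosN opprD opprK -pmulrn.
by rewrite (periodicn (@cosD2pi R)) cosN.
Qed.

Lemma cos_eq1_int (z : R) : cos (2 * pi * z) = 1 -> exists k : int, z = k%:~R.
Proof.
move=> h; exists (Num.floor z).
set k := Num.floor z; set r := z - k%:~R.
have r_ge0 : 0 <= r by rewrite subr_ge0 floor_le.
have r_lt1 : r < 1 by have := floorD1_gt z; rewrite intrD -/k /r; lra.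
have [r0|r_neq0] := eqVneq r 0; first by apply/eqP; rewrite -subr_eq0 -/r r0.
have r_gt0 : 0 < r by rewrite lt_def r_neq0 r_ge0.
have : cos ((pi * r) *+ 2) = 1.
  by rewrite -h -(cosD2piz k) -mulrzr /r; congr cos; ring.
have : 0 < sin (pi * r).
  by apply: sin_gt0_pi; rewrite mulr_gt0 ?pi_gt0 //= -[ltRHS]mulr1 ltr_pM2l // pi_gt0.
by rewrite cos_mulr2n cos2sin2; nra.
Qed.

(* The roots of [t^3 - t + mu] are a real [t1] and [(- t1 +- sqrt D) / 2] with
   [D = 4 - 3 t1^2]; integral gaps [k2 + k3 = 3 t1], [k3 - k2 = sqrt D] force
   [3 (k3 - k2)^2 + (k2 + k3)^2 = 12]. *)
Lemma adjoint_roots_integral_gaps (mu : R) :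
  (forall c d, adjoint_root mu c d -> c = 0) ->
  (forall t t', adjoint_root mu 0 t -> adjoint_root mu 0 t' ->
     exists k : int, t - t' = k%:~R) ->
  mu = 0.
Proof.
move=> real_part0 int_gap.
have [t1 ht1] := adjoint_imag_root_exists mu.
have mu_t1 : mu = t1 - t1 ^+ 3 by move/adjoint_root_imag: ht1; lra.
pose D := 4 - 3 * t1 ^+ 2.
have [D_lt0|D_ge0] := ltrP D 0.
  have sD : Num.sqrt (- D) ^+ 2 = - D by rewrite sqr_sqrtr // oppr_ge0 ltW.
  pose c := Num.sqrt (- D) / 2.
  have c2 : c ^+ 2 = - D / 4 by rewrite /c expr_div_n sD; field.
  have c_root : adjoint_root mu c (- t1 / 2).
    split; last by rewrite c2 mu_t1 /D; field.
    by rewrite exprS c2 /D; field.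
  move: (real_part0 _ _ c_root) => /eqP.
  by rewrite mulf_eq0 invr_eq0 pnatr_eq0 orbF sqrtr_eq0 oppr_le0 leNgt D_lt0.
have sD : Num.sqrt D ^+ 2 = D by rewrite sqr_sqrtr.
pose t2 := (- t1 + Num.sqrt D) / 2; pose t3 := (- t1 - Num.sqrt D) / 2.
have t23_root t : t = t2 \/ t = t3 -> adjoint_root mu 0 t.
  move=> ht; apply/adjoint_root_imag; rewrite mu_t1.
  transitivity ((t - t1) * (Num.sqrt D ^+ 2 - D) / 4).
    by case: ht => ->; rewrite /t2 /t3 /D; field.
  by rewrite sD subrr mulr0 mul0r.
have [k2 hk2] := int_gap _ _ ht1 (t23_root t2 (or_introl erefl)).
have [k3 hk3] := int_gap _ _ ht1 (t23_root t3 (or_intror erefl)).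
have h12 : 3 * (k3 - k2) ^+ 2 + (- (k2 + k3)) ^+ 2 = 12 :> int.
  apply: (@intr_inj R).
  rewrite !(intrD, intrM, intrB, intrN, rmorphXn, rmorph_nat) -hk2 -hk3 /=.
  by rewrite /t2 /t3; move: sD; rewrite /D; nra.
have := congr1 (fun z : int => z%:~R : R) (three_sqr_add_sqr_eq12 h12).
rewrite /= !(intrD, intrM, intrB, intrN, rmorphXn, rmorph_nat) -hk2 -hk3 /= rmorph0.
by rewrite mu_t1 /t2 /t3 => h; nra.
Qed.

End IntegralGaps.

Section SpectrumOfA.
Variable R : realType.
Local Notation leb := (@lebesgue_measure R).
Local Notation L := (Lper R).
Local Notation cont_on := (cont_on L).
Local Notation deriv_on := (deriv_on L).
Local Notation A_classical := (A_classical L).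
Local Notation boundary_conditions := (boundary_conditions L).
Implicit Types (mu a : R) (phi psi u v : R -> R).

Lemma L_gt0 : 0 < L.
Proof. by rewrite /Lper mulr_gt0 // pi_gt0. Qed.

Lemma L_2pi : L = pi *+ 2.
Proof. by rewrite /Lper mulr2n mulrDl mul1r. Qed.

Lemma H3_with_regular phi phi1 phi2 phi3 : H3_with phi phi1 phi2 phi3 ->
  [/\ cont_on phi, cont_on phi1, cont_on phi2, deriv_on phi phi1 & deriv_on phi1 phi2].
Proof.
move=> [_ [i3 [i2 [i1 [e2 [e1 e0]]]]]].
have c2 := cont_on_primitive L_gt0 i3 e2; have c1 := cont_on_primitive L_gt0 i2 e1.
have c0 := cont_on_primitive L_gt0 i1 e0.
split=> //; [exact (deriv_on_primitive L_gt0 c1 e0) | exact (deriv_on_primitive L_gt0 c2 e1)].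
Qed.

Lemma A_graph_cont phi psi : A_graph phi psi -> cont_on phi.
Proof. by move=> [phi1 [phi2 [phi3 [/H3_with_regular[]]]]]. Qed.

Lemma A_graph_classical phi psi : cont_on psi -> A_graph phi psi ->
  exists phi1 phi2, A_classical phi phi1 phi2 psi /\ boundary_conditions phi phi1.
Proof.
move=> cpsi [phi1 [phi2 [phi3 [H [phi0 [phiL [phi1L ae]]]]]]].
have [c0 c1 c2 d0 d1] := H3_with_regular H.
exists phi1, phi2; split=> //; split=> //.
have c3 : cont_on (fun x => - psi x - phi1 x) by cont_tac.
apply (deriv_on_primitive (c := phi2 0) L_gt0 c3) => x xI.
case: H => _ [i3 [_ [_ [-> // _]]]]; congr (_ + _); rewrite /Rintegral; congr fine.
have sub := seg_sub xI.
apply: ae_eq_integral => //.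
- by apply: measurable_funS sub _ => //; case/integrableP: i3.
- apply: measurable_funS sub _ => //.
  by case/integrableP: (cont_on_integrable c3).
- apply: filterS ae; first exact: (ae_filter_ringOfSetsType leb).
  by move=> y Hy /sub yI; rewrite /= (Hy yI); congr EFin; ring.
Qed.

Lemma A_classical_graph phi phi1 phi2 psi : cont_on psi ->
  A_classical phi phi1 phi2 psi -> boundary_conditions phi phi1 -> A_graph phi psi.
Proof.
move=> cpsi [c0 c1 c2 d0 d1 d2] [phi0 phiL phi1L].
have c3 : cont_on (fun x => - psi x - phi1 x) by cont_tac.
exists phi1, phi2, (fun x => - psi x - phi1 x).
split; last by do !split=> //; apply: aeW => x _; ring.
split.
  split; first by case/integrableP: (cont_on_integrable c3) => /measurable_EFinP.
  have c4 : cont_on (fun x => (- psi x - phi1 x) ^+ 2) by cont_tac.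
  case/integrableP: (cont_on_integrable c4) => _; apply: le_lt_trans.
  rewrite le_eqVlt; apply/orP; left; apply/eqP.
  by apply: eq_integral => x _ /=; rewrite ger0_norm ?sqr_ge0.
do !split; try exact: cont_on_integrable.
- exact (deriv_on_FTC L_gt0 c2 c3 d2).
- exact (deriv_on_FTC L_gt0 c1 c2 d1).
- exact (deriv_on_FTC L_gt0 c0 c1 d0).
Qed.

Lemma A_graph_one_sub_cos a : A_graph (fun x => a * (1 - cos x)) (fun=> 0).
Proof.
have -> : (fun x => a * (1 - cos x)) = (fun x => a * (1 - cos x) + 0 * sin x).
  by apply: boolp.funext => x; ring.
apply: A_classical_graph (@cont_on_cst R L 0) (A_classical_trig L a 0) _.
by split; rewrite ?L_2pi ?cos0 ?sin0 ?cos2pi ?sin2pi; ring.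
Qed.

Lemma A_kernel phi : A_graph phi (fun=> 0) ->
  exists a, forall x, I0L x -> phi x = a * (1 - cos x).
Proof.
move=> /(A_graph_classical (@cont_on_cst R L 0)) [phi1 [phi2 [H [phi0 _ phi1L]]]].
pose k := phi2 0; pose p := phi1 0.
have := A_classicalB H (A_classical_trig L k p).
move=> /(eq_A_classical (fun=> subrr 0)) /A_classical_cauchy0 vanish.
have {}vanish : forall x, I0L x -> phi x = k * (1 - cos x) + p * sin x /\
    phi1 x = k * sin x + p * cos x.
  move=> x xI; have [|||/eqP + /eqP] := vanish _ _ _ x xI.
  - by rewrite phi0 cos0 sin0; ring.
  - by rewrite cos0 sin0 /p; ring.
  - by rewrite cos0 sin0 /k; ring.
  by rewrite !subr_eq0 => /eqP -> /eqP ->.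
have [_] := vanish _ (segb L_gt0).
rewrite phi1L L_2pi sin2pi cos2pi => p0.
by exists k => x /vanish [-> _]; rewrite -/p (_ : p = 0); [ring | lra].
Qed.

Lemma not_aeq_one_sub_cos a : a != 0 -> ~ aeq (fun x : R => a * (1 - cos x)) (fun=> 0).
Proof.
move=> a0 [N [mN N0 sub]].
have pi_gt0 := pi_gt0 R.
have J : `[pi / 2, pi] `<=` N.
  move=> x; rewrite /= in_itv /= => /andP[x_ge x_le]; apply: sub => /=.
  apply/not_implyP; split; first by rewrite /I0L /= in_itv /= L_2pi mulr2n; apply/andP; split; lra.
  move/eqP; rewrite mulf_eq0 (negbTE a0) /= subr_eq0 => /eqP h.
  have : 0 <= cos (x - pi) by apply: cos_ge0_pihalf; apply/andP; split; lra.
  by rewrite cosB cospi sinpi mulrN1 mulr0 addr0 -h; lra.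
have : (leb `[(pi / 2)%R, pi%R] <= 0)%E.
  apply: le_trans (le_measure leb (mem_set (measurable_itv `[pi / 2, pi])) (mem_set mN) J) _.
  by rewrite le_eqVlt; apply/orP; left; apply/eqP; exact: N0.
rewrite lebesgue_measure_itv /= lte_fin.
have -> : (pi : R) / 2 < pi by lra.
by rewrite lee_fin => h; clear -h pi_gt0; lra.
Qed.

Lemma imag_eigenvalue0 : imag_eigenvalue (0 : R).
Proof.
exists (fun x => 1 * (1 - cos x)), (fun x => 0 * (1 - cos x)).
split; first by move=> [/(not_aeq_one_sub_cos (oner_neq0 R))].
split.
- have -> : (fun x => - 0 * (0 * (1 - cos x))) = (fun=> 0 : R).
    by apply: boolp.funext => x; ring.
  exact: A_graph_one_sub_cos.
- have -> : (fun x => 0 * (1 * (1 - cos x))) = (fun=> 0 : R).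
    by apply: boolp.funext => x; ring.
  exact: A_graph_one_sub_cos.
Qed.

Lemma imag_eigenvalue_eq0 mu : imag_eigenvalue mu -> mu = 0.
Proof.
move=> [u [v [nontrivial [Hu Hv]]]].
have cu := A_graph_cont Hu; have cv := A_graph_cont Hv.
have cmv : cont_on (fun x => - mu * v x) by cont_tac.
have cmu : cont_on (fun x => mu * u x) by cont_tac.
have [u1 [u2 [Au bu]]] := A_graph_classical cmv Hu.
have [v1 [v2 [Av bv]]] := A_graph_classical cmu Hv.
have H : eigen_ode L mu u u1 u2 v v1 v2 by [].
have [N_gt0|N_le0] := ltrP 0 (u2 L ^+ 2 + v2 L ^+ 2).
  have [real0 gaps] := eigen_ode_adjoint_roots L_gt0 H bu bv N_gt0.
  apply: adjoint_roots_integral_gaps real0 _ => t t' ht ht'.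
  by have := gaps t t' ht ht'; rewrite /Lper mulrC; exact: cos_eq1_int.
have [u2L v2L] : u2 L = 0 /\ v2 L = 0 by split; nra.
exfalso; apply: nontrivial; split; apply: aeW => x xI.
all: by case: (eigen_ode_boundary_zero L_gt0 H bu bv u2L v2L xI).
Qed.

End SpectrumOfA.

Theorem lemma2p6 (R : realType) :
  (* sigma_p(A) ∩ iR = {0} *)
  (forall mu : R, imag_eigenvalue mu <-> mu = 0) /\
  (* ker A = { a (1 - cos x) : a in R } *)
  (forall phi : R -> R, A_graph phi (fun=> 0) ->
     exists a : R, forall x, I0L x -> phi x = a * (1 - cos x)) /\
  (forall a : R, A_graph (fun x : R => a * (1 - cos x)) (fun=> 0)).
Proof.
split; last by split; [exact: A_kernel | exact: A_graph_one_sub_cos].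
by move=> mu; split=> [|->]; [exact: imag_eigenvalue_eq0 | exact: imag_eigenvalue0].
Qed.
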